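(* Let $B_1,B_2\subseteq G''$ be two horoballs of type II in $(G'',\rho_c)$, i.e. $B_i=\{y''\in G'': d_{\theta''_i}(y'')\le\delta_i\}$ with $\theta''_i=(\theta_i,\theta'_i)$, $\theta_i\in\partial G$, $\theta'_i\in\partial G'$, $\delta_i\in\mathbb R$, and assume $B_1,B_2$ are nonempty. Then they have the infinite touching property: there exist sequences $(\xi^{(1)}_j)_{j\ge0}$ in $B_1$ and $(\xi^{(2)}_j)_{j\ge0}$ in $B_2$, each consisting of infinitely many distinct points, such that $\sup_j\rho_c(\xi^{(1)}_j,\xi^{(2)}_j)<\infty$.
   Context: $G,G'$ are finitely generated groups with neutral elements $o,o'$, word metrics $d,d'$ from Cayley graphs with respect to finite generating sets, growth rates $a=\lim v_n^{1/n}>1$, $a'=\lim (v'_n)^{1/n}>1$ ($v_n,v'_n$ the ball volumes), and $c:=\log a/\log a'$. $G''=G\times G'$ has origin $o''=(o,o')$ and metric $\rho_c((x,x'),(y,y'))=d(x,y)+d'(x',y')/c$. Horoboundary of $G$: with $d_x(y)=d(x,y)-d(x,o)$, $\overline G$ is the closure of $\{d_x: x\in G\}$ among $1$-Lipschitz functions vanishing at $o$ under pointwise convergence, $\partial G=\overline G\setminus G$, and $\theta\in\partial G$ has associated function $d_\theta$; similarly for $G'$. For $\theta\in\partial G$, $\theta'\in\partial G'$, $d_{(\theta,\theta')}(y,y'):=d_\theta(y)+d_{\theta'}(y')/c$. *)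

From Stdlib Require Export Reals List.
Open Scope R_scope.

Definition is_group {G : Type} (mul : G -> G -> G) (inv : G -> G) (o : G) : Prop :=
  (forall x y z, mul x (mul y z) = mul (mul x y) z) /\
  (forall x, mul o x = x) /\ (forall x, mul x o = x) /\
  (forall x, mul (inv x) x = o) /\ (forall x, mul x (inv x) = o).

Definition word_prod {G : Type} (mul : G -> G -> G) (o : G) (w : list G) : G :=
  fold_right mul o w.

(* d is the word metric (Cayley graph distance) for the finite set S:
   d x y is the minimal length of a word w in S ∪ S^{-1} with x * w = y.
   (The existence part forces S to generate G.) *)
Definition is_word_metric {G : Type} (mul : G -> G -> G) (inv : G -> G) (o : G)
  (S : list G) (d : G -> G -> nat) : Prop :=
  forall x y,
    (exists w, incl w (S ++ map inv S) /\ mul x (word_prod mul o w) = y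
               /\ length w = d x y) /\
    (forall w, incl w (S ++ map inv S) -> mul x (word_prod mul o w) = y ->
               (d x y <= length w)%nat).

Definition ball_volume {G : Type} (d : G -> G -> nat) (o : G) (n k : nat) : Prop :=
  exists l : list G, NoDup l /\ length l = k /\ forall x, In x l <-> (d o x <= n)%nat.

Definition growth_rate {G : Type} (d : G -> G -> nat) (o : G) (a : R) : Prop :=
  exists v : nat -> nat, (forall n, ball_volume d o n (v n)) /\
    Un_cv (fun n => Rpower (INR (v n)) (/ INR n)) a.

Definition dfun {G : Type} (d : G -> G -> nat) (o x : G) : G -> R :=
  fun y => INR (d x y) - INR (d x o).

(* h lies in the closure of {d_x : x in G} among 1-Lipschitz functions
   vanishing at o, for the topology of pointwise convergence (basic
   neighbourhoods: finitely many points, tolerance eps). *)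
Definition in_horo_closure {G : Type} (d : G -> G -> nat) (o : G) (h : G -> R) : Prop :=
  (forall y z, Rabs (h y - h z) <= INR (d y z)) /\ h o = 0 /\
  (forall (F : list G) (eps : R), 0 < eps ->
     exists x, forall y, In y F -> Rabs (dfun d o x y - h y) < eps).

(* h = d_theta for a point theta of the horoboundary ∂G = closure \ G *)
Definition in_horoboundary {G : Type} (d : G -> G -> nat) (o : G) (h : G -> R) : Prop :=
  in_horo_closure d o h /\ forall x : G, ~ (forall y, h y = dfun d o x y).

Definition rho_c {G G' : Type} (d : G -> G -> nat) (d' : G' -> G' -> nat) (c : R)
  (p q : G * G') : R :=
  INR (d (fst p) (fst q)) + INR (d' (snd p) (snd q)) / c.

Definition horoball2 {G G' : Type} (h : G -> R) (h' : G' -> R) (c delta : R)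
  (p : G * G') : Prop :=
  h (fst p) + h' (snd p) / c <= delta.

(* A horofunction h on a Cayley graph can be followed downhill forever: at every
   point y some neighbour z has h z <= h y - 1.  Indeed h is a pointwise limit
   of functions d_x with x <> y, and the vertex preceding y on a geodesic from x
   to y is a neighbour where d_x drops by exactly 1.
   Take (y, y') in B1, a downhill path g from y for theta_1 in G and a downhill
   path x from y' for theta'_2 in G'.  The points (g n, x m_n), m_n = floor(c n),
   stay in B1: h_1 falls by n while h'_1 / c rises by at most m_n / c <= n.  The
   points (g n, x (m_n + K)) are in B2 for K large: h_2 rises by at most n while
   h'_2 / c falls by (m_n + K) / c > n - 1/c + K/c.  Paired points are at
   rho_c-distance at most K / c. *)
From Stdlib Require Import Reals Lra Lia List ClassicalEpsilon ZArith.
Import ListNotations.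
Open Scope R_scope.

Lemma finite_strict_lower_bound (A : Type) (f : A -> R) (r : R) (L : list A) :
  (forall z, In z L -> r < f z) -> exists m, 0 < m /\ forall z, In z L -> r + m <= f z.
Proof.
  induction L as [|a L IH]; intros HL.
  - exists 1; split; [lra | intros z []].
  - destruct IH as [m [Hm Hz]]; [intros z Hz; apply HL; right; exact Hz |].
    pose proof (HL a (or_introl eq_refl)) as Ha.
    exists (Rmin m (f a - r)); split; [apply Rmin_pos; lra |].
    intros z [<- | Hin].
    + pose proof (Rmin_r m (f a - r)); lra.
    + pose proof (Rmin_l m (f a - r)); specialize (Hz z Hin); lra.
Qed.

Definition nat_floor (r : R) : nat := Z.to_nat (Int_part r).

Lemma nat_floor_spec (r : R) : 0 <= r -> INR (nat_floor r) <= r < INR (nat_floor r) + 1.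
Proof.
  intros Hr; destruct (base_Int_part r) as [Hle Hgt].
  assert (Hpos : (0 <= Int_part r)%Z).
  { apply Z.lt_succ_r, lt_IZR; rewrite succ_IZR; lra. }
  unfold nat_floor; rewrite INR_IZR_INZ, Z2Nat.id by exact Hpos; lra.
Qed.

Lemma nat_floor_mul_INR_spec (c : R) (n : nat) : 0 <= c ->
  INR (nat_floor (c * INR n)) <= c * INR n < INR (nat_floor (c * INR n)) + 1.
Proof. intros Hc; apply nat_floor_spec, Rmult_le_pos; [exact Hc | apply pos_INR]. Qed.

Definition unit_step_path {G : Type} (d : G -> G -> nat) (g : nat -> G) : Prop :=
  forall n, (d (g n) (g (S n)) <= 1)%nat.

Definition descending_path {G : Type} (h : G -> R) (g : nat -> G) : Prop :=
  forall n, h (g (S n)) <= h (g n) - 1.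

Lemma descending_path_le {G : Type} (h : G -> R) (g : nat -> G) :
  descending_path h g -> forall i k, h (g (i + k)%nat) <= h (g i) - INR k.
Proof.
  intros Hg i k; induction k as [|k IH].
  - rewrite Nat.add_0_r; simpl; lra.
  - rewrite Nat.add_succ_r, S_INR; specialize (Hg (i + k)%nat); lra.
Qed.

Lemma descending_path_inj {G : Type} (h : G -> R) (g : nat -> G) :
  descending_path h g -> forall i j, g i = g j -> i = j.
Proof.
  intros Hg.
  assert (Hlt : forall i j, (i < j)%nat -> g i <> g j).
  { intros i j Hij E.
    pose proof (descending_path_le h g Hg i (j - i)) as Hd.
    replace (i + (j - i))%nat with j in Hd by lia; rewrite E in Hd.
    assert (0 < INR (j - i)) by (apply lt_0_INR; lia); lra. }
  intros i j E; destruct (Nat.lt_total i j) as [H | [H | H]]; [| exact H |].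
  - exfalso; exact (Hlt i j H E).
  - exfalso; exact (Hlt j i H (eq_sym E)).
Qed.

Lemma lipschitz_unit_step_path_le {G : Type} (d : G -> G -> nat) (h : G -> R)
  (g : nat -> G) :
  (forall y z, Rabs (h y - h z) <= INR (d y z)) -> unit_step_path d g ->
  forall n, h (g n) <= h (g 0%nat) + INR n.
Proof.
  intros Hlip Hg n; induction n as [|n IH]; [simpl; lra |].
  rewrite S_INR.
  pose proof (Hlip (g n) (g (S n))) as Hl; rewrite Rabs_minus_sym in Hl.
  pose proof (le_INR _ _ (Hg n)) as Hs; simpl in Hs.
  pose proof (Rle_abs (h (g (S n)) - h (g n))).
  lra.
Qed.

Section WordMetric.

Variables (G : Type) (mul : G -> G -> G) (inv : G -> G) (o : G) (gens : list G)
  (d : G -> G -> nat).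
Hypothesis HG : is_group mul inv o.
Hypothesis Hd : is_word_metric mul inv o gens d.

Let letters := gens ++ map inv gens.

Lemma word_prod_app (u v : list G) :
  word_prod mul o (u ++ v) = mul (word_prod mul o u) (word_prod mul o v).
Proof.
  destruct HG as [Hassoc [Hmul1 _]].
  induction u as [|s u IH]; simpl; [now rewrite Hmul1 | now rewrite IH, Hassoc].
Qed.

Lemma word_dist_refl (x : G) : d x x = 0%nat.
Proof.
  destruct HG as [_ [_ [Hmul1 _]]].
  destruct (Hd x x) as [_ Hmin].
  specialize (Hmin [] ltac:(intros t [])); simpl in Hmin.
  rewrite Hmul1 in Hmin; specialize (Hmin eq_refl); lia.
Qed.

Lemma word_dist_triangle (x y z : G) : (d x z <= d x y + d y z)%nat.
Proof.
  destruct HG as [Hassoc _].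
  destruct (Hd x y) as [[u [Hu [Hxu Hlu]]] _].
  destruct (Hd y z) as [[v [Hv [Hyv Hlv]]] _].
  destruct (Hd x z) as [_ Hmin].
  rewrite <- Hlu, <- Hlv, <- length_app; apply Hmin.
  - intros t Ht; apply in_app_or in Ht; destruct Ht; auto.
  - rewrite word_prod_app, Hassoc, Hxu; exact Hyv.
Qed.

Lemma word_dist_unit_step_path (g : nat -> G) :
  unit_step_path d g -> forall k K, (d (g k) (g (k + K)%nat) <= K)%nat.
Proof.
  intros Hg k K; induction K as [|K IH].
  - rewrite Nat.add_0_r, word_dist_refl; lia.
  - pose proof (word_dist_triangle (g k) (g (k + K)%nat) (g (k + S K)%nat)).
    rewrite Nat.add_succ_r in *; specialize (Hg (k + K)%nat); lia.
Qed.

Definition neighbours (y : G) : list G := map (fun s => mul y (inv s)) letters.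

Lemma inv_involutive (t : G) : inv (inv t) = t.
Proof.
  destruct HG as [Hassoc [Hmul1 [H1mul [Hinvl _]]]].
  rewrite <- (H1mul (inv (inv t))), <- (Hinvl t), Hassoc, Hinvl, Hmul1; reflexivity.
Qed.

Lemma word_dist_neighbours (y z : G) : In z (neighbours y) -> (d y z <= 1)%nat.
Proof.
  intros Hz; apply in_map_iff in Hz; destruct Hz as [s [<- Hs]].
  destruct (Hd y (mul y (inv s))) as [_ Hmin].
  apply (Hmin [inv s]).
  - intros t [<- | []]; apply in_app_or in Hs; apply in_or_app; destruct Hs as [Hs | Hs].
    + right; now apply in_map.
    + left; apply in_map_iff in Hs; destruct Hs as [u [<- Hu]].
      now rewrite inv_involutive.
  - destruct HG as [_ [_ [Hmul1 _]]]; simpl; now rewrite Hmul1.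
Qed.

Lemma geodesic_predecessor (x y : G) :
  x <> y -> exists z, In z (neighbours y) /\ (d x z < d x y)%nat.
Proof.
  intros Hxy; destruct HG as [Hassoc [_ [Hmul1 [_ Hinvr]]]].
  destruct (Hd x y) as [[w [Hw [Hxw Hlw]]] _].
  assert (Hne : w <> []) by (intros ->; simpl in Hxw; rewrite Hmul1 in Hxw; auto).
  destruct (exists_last Hne) as [w' [s ->]].
  set (z := mul x (word_prod mul o w')).
  assert (Hzs : mul z s = y).
  { rewrite <- Hxw, word_prod_app; unfold z; simpl; now rewrite Hmul1, Hassoc. }
  exists z; split.
  - replace z with (mul y (inv s))
      by (rewrite <- Hzs, <- Hassoc, Hinvr, Hmul1; reflexivity).
    apply (in_map (fun s => mul y (inv s))), Hw, in_or_app; right; left; reflexivity.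
  - destruct (Hd x z) as [_ Hmin].
    rewrite length_app in Hlw; simpl in Hlw.
    enough (d x z <= length w')%nat by lia.
    apply Hmin; [intros t Ht; apply Hw, in_or_app; now left | reflexivity].
Qed.

Lemma horoboundary_approx_avoiding (h : G -> R) :
  in_horoboundary d o h -> forall (y : G) (F : list G) (eps : R), 0 < eps ->
  exists x, x <> y /\ forall z, In z F -> Rabs (dfun d o x z - h z) < eps.
Proof.
  intros [[_ [_ Happrox]] Hnot] y F eps Heps.
  destruct (not_all_ex_not _ _ (Hnot y)) as [w Hw].
  set (e := Rmin eps (Rabs (h w - dfun d o y w))).
  assert (He : 0 < e).
  { apply Rmin_pos; [exact Heps |]; apply Rabs_pos_lt; intros E; apply Hw; lra. }
  destruct (Happrox (w :: F) e He) as [x Hx].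
  exists x; split.
  - intros ->; specialize (Hx w (or_introl eq_refl)).
    rewrite Rabs_minus_sym in Hx.
    pose proof (Rmin_r eps (Rabs (h w - dfun d o y w))) as He_le; fold e in He_le; lra.
  - intros z Hz; specialize (Hx z (or_intror Hz)).
    pose proof (Rmin_l eps (Rabs (h w - dfun d o y w))) as He_le; fold e in He_le; lra.
Qed.

Lemma horoboundary_descent_step (h : G -> R) :
  in_horoboundary d o h -> forall y, exists z, (d y z <= 1)%nat /\ h z <= h y - 1.
Proof.
  intros Hh y; apply NNPP; intros Hnone.
  assert (Hgap : forall z, In z (neighbours y) -> h y - 1 < h z).
  { intros z Hz; apply Rnot_le_lt; intros Hle.
    apply Hnone; exists z; split; [now apply word_dist_neighbours | lra]. }
  destruct (finite_strict_lower_bound _ h _ _ Hgap) as [m [Hm Hmin]].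
  (* d_x drops by 1 from y to z and h is (m/2)-close to d_x at both points. *)
  destruct (horoboundary_approx_avoiding h Hh y (y :: neighbours y) (m / 2))
    as [x [Hxy Hx]]; [lra |].
  destruct (geodesic_predecessor x y Hxy) as [z [Hz Hdz]].
  pose proof (Hx y (or_introl eq_refl)) as Hay.
  pose proof (Hx z (or_intror Hz)) as Haz.
  specialize (Hmin z Hz).
  apply le_INR in Hdz; rewrite S_INR in Hdz.
  unfold dfun in Hay, Haz; apply Rabs_def2 in Hay; apply Rabs_def2 in Haz.
  lra.
Qed.

Lemma horoboundary_descending_path (h : G -> R) :
  in_horoboundary d o h -> forall y,
  exists g : nat -> G, g 0%nat = y /\ unit_step_path d g /\ descending_path h g.
Proof.
  intros Hh y.
  destruct (choice _ (horoboundary_descent_step h Hh)) as [next Hnext].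
  exists (fun n => Nat.iter n next y).
  split; [reflexivity | split; intros n; apply Hnext].
Qed.

End WordMetric.

Lemma ln_ratio_pos (a a' : R) : 1 < a -> 1 < a' -> 0 < ln a / ln a'.
Proof.
  intros Ha Ha'; apply Rdiv_lt_0_compat; rewrite <- ln_1; apply ln_increasing; lra.
Qed.

Lemma horoball2_iff {G G' : Type} (h : G -> R) (h' : G' -> R) (c delta : R) p :
  0 < c -> horoball2 h h' c delta p <-> c * h (fst p) + h' (snd p) <= c * delta.
Proof.
  intros Hc; unfold horoball2.
  replace (c * h (fst p) + h' (snd p)) with (c * (h (fst p) + h' (snd p) / c))
    by (field; lra).
  split; intros H.
  - now apply Rmult_le_compat_l; [lra |].
  - now apply Rmult_le_reg_l in H.
Qed.

Theorem lemma4p2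
  (G : Type) (mul : G -> G -> G) (inv : G -> G) (o : G) (S : list G)
  (d : G -> G -> nat) (a : R)
  (G' : Type) (mul' : G' -> G' -> G') (inv' : G' -> G') (o' : G') (S' : list G')
  (d' : G' -> G' -> nat) (a' : R)
  (HG : is_group mul inv o) (Hd : is_word_metric mul inv o S d)
  (Ha : growth_rate d o a) (Ha1 : 1 < a)
  (HG' : is_group mul' inv' o') (Hd' : is_word_metric mul' inv' o' S' d')
  (Ha' : growth_rate d' o' a') (Ha'1 : 1 < a')
  (h1 h2 : G -> R) (h1' h2' : G' -> R) (delta1 delta2 : R)
  (Hh1 : in_horoboundary d o h1) (Hh1' : in_horoboundary d' o' h1')
  (Hh2 : in_horoboundary d o h2) (Hh2' : in_horoboundary d' o' h2')
  (HB1 : exists p, horoball2 h1 h1' (ln a / ln a') delta1 p)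
  (HB2 : exists p, horoball2 h2 h2' (ln a / ln a') delta2 p) :
  exists xi1 xi2 : nat -> G * G',
    (forall i j, xi1 i = xi1 j -> i = j) /\
    (forall i j, xi2 i = xi2 j -> i = j) /\
    (forall j, horoball2 h1 h1' (ln a / ln a') delta1 (xi1 j)) /\
    (forall j, horoball2 h2 h2' (ln a / ln a') delta2 (xi2 j)) /\
    exists M : R, forall j, rho_c d d' (ln a / ln a') (xi1 j) (xi2 j) <= M.
Proof.
  set (c := ln a / ln a'); pose proof (ln_ratio_pos a a' Ha1 Ha'1) as Hc; fold c in Hc.
  destruct HB1 as [[y y'] HB1]; apply horoball2_iff in HB1; [| exact Hc].
  fold c in HB1; simpl in HB1.
  destruct (horoboundary_descending_path G mul inv o S d HG Hd h1 Hh1 y)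
    as [g [Hg0 [Hgs Hgd]]].
  destruct (horoboundary_descending_path G' mul' inv' o' S' d' HG' Hd' h2' Hh2' y')
    as [x [Hx0 [Hxs Hxd]]].
  destruct (INR_unbounded (c * (h2 y - delta2) + h2' y' + 1)) as [K HK].
  set (m n := nat_floor (c * INR n)).
  exists (fun n => (g n, x (m n))), (fun n => (g n, x (m n + K)%nat)).
  destruct Hh1' as [[Hlip1' _] _]; destruct Hh2 as [[Hlip2 _] _].
  split; [| split; [| split; [| split]]].
  - intros i j E; apply (f_equal fst) in E; exact (descending_path_inj h1 g Hgd i j E).
  - intros i j E; apply (f_equal fst) in E; exact (descending_path_inj h1 g Hgd i j E).
  - intros n; apply horoball2_iff; [exact Hc | simpl].
    pose proof (descending_path_le h1 g Hgd 0 n) as Hfall; simpl in Hfall.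
    pose proof (lipschitz_unit_step_path_le d' h1' x Hlip1' Hxs (m n)) as Hrise.
    pose proof (nat_floor_mul_INR_spec c n (Rlt_le _ _ Hc)) as Hm; fold (m n) in Hm.
    apply (Rmult_le_compat_l c) in Hfall; [| lra].
    rewrite Hg0 in Hfall; rewrite Hx0 in Hrise; lra.
  - intros n; apply horoball2_iff; [exact Hc | simpl].
    pose proof (lipschitz_unit_step_path_le d h2 g Hlip2 Hgs n) as Hrise.
    pose proof (descending_path_le h2' x Hxd 0 (m n + K)) as Hfall; simpl in Hfall.
    pose proof (nat_floor_mul_INR_spec c n (Rlt_le _ _ Hc)) as Hm; fold (m n) in Hm.
    apply (Rmult_le_compat_l c) in Hrise; [| lra].
    rewrite Hg0 in Hrise; rewrite Hx0, plus_INR in Hfall; lra.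
  - exists (INR K / c); intros n; unfold rho_c; simpl.
    rewrite (word_dist_refl G mul inv o S d HG Hd).
    rewrite Rplus_0_l; apply Rmult_le_compat_r; [now apply Rlt_le, Rinv_0_lt_compat |].
    exact (le_INR _ _ (word_dist_unit_step_path G' mul' inv' o' S' d' HG' Hd' x Hxs (m n) K)).
Qed.
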